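(* The VCCR $scwc$ satisfies Availability; in fact, $scwc(\mathbf P)$ is acyclic for every linear profile $\mathbf P$.
   Context: Profiles: $\mathbf P:V\to\mathcal L(X)$, $V$ nonempty finite set of voters, $X=X(\mathbf P)$ nonempty finite set of candidates, $\mathcal L(X)$ strict linear orders. $\mathrm{Margin}_{\mathbf P}(x,y)$ = #voters ranking $x$ above $y$ minus #ranking $y$ above $x$. Majority path: sequence of candidates with positive consecutive margins; strength = minimum of those margins. $(x,y)\in sc(\mathbf P)$ iff $\mathrm{Margin}_{\mathbf P}(x,y)>0$ exceeds the strength of every majority path from $y$ to $x$. $(x,y)\in wc(\mathbf P)$ iff $\mathrm{Margin}_{\mathbf P}(x,y)>0$ and $\mathrm{Margin}_{\mathbf P}(x,z)\ge\mathrm{Margin}_{\mathbf P}(y,z)$ for all $z\in X(\mathbf P)$. $scwc(\mathbf P)=sc(\mathbf P)\cup wc(\mathbf P)$. Availability: for every profile some candidate $x$ has no $y$ with $(y,x)\in scwc(\mathbf P)$. *)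

From mathcomp Require Import all_boot all_order all_algebra.
Set Implicit Arguments. Unset Strict Implicit. Unset Printing Implicit Defensive.
Import Order.TTheory GRing.Theory Num.Theory.
Local Open Scope ring_scope.

Definition strict_linear_order (X : finType) (R : rel X) : Prop :=
  [/\ irreflexive R, transitive R & forall x y, x != y -> R x y || R y x].

(* A linear profile: each voter v in V submits the ranking P v
   ("P v x y" means v ranks x above y). *)
Definition linear_profile (V X : finType) (P : V -> rel X) : Prop :=
  forall v, strict_linear_order (P v).

Definition Margin (V X : finType) (P : V -> rel X) (x y : X) : int :=
  (#|[set v | P v x y]|%:Z - #|[set v | P v y x]|%:Z).

Definition majority_path (V X : finType) (P : V -> rel X) (y : X) (p : seq X) : bool :=
  path (fun a b => 0 < Margin P a b) y p.

Fixpoint strength (V X : finType) (P : V -> rel X) (x : X) (p : seq X) : int :=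
  match p with
  | [::] => 0
  | [:: y] => Margin P x y
  | y :: p' => Num.min (Margin P x y) (strength P y p')
  end.

Definition sc (V X : finType) (P : V -> rel X) (x y : X) : Prop :=
  0 < Margin P x y /\
  forall p : seq X, p != [::] -> last y p = x -> majority_path P y p ->
    strength P y p < Margin P x y.

Definition wc (V X : finType) (P : V -> rel X) (x y : X) : Prop :=
  0 < Margin P x y /\ forall z : X, Margin P y z <= Margin P x z.

Definition scwc (V X : finType) (P : V -> rel X) (x y : X) : Prop :=
  sc P x y \/ wc P x y.

Fixpoint ppath (T : Type) (e : T -> T -> Prop) (x : T) (p : seq T) : Prop :=
  match p with
  | [::] => True
  | y :: p' => e x y /\ ppath e y p'
  end.

Definition acyclic (T : eqType) (e : T -> T -> Prop) : Prop :=
  forall (x : T) (p : seq T), p != [::] -> last x p = x -> ~ ppath e x p.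

Definition available (V X : finType) (P : V -> rel X) : Prop :=
  exists x : X, forall y : X, ~ scwc P y x.

From mathcomp Require Import all_boot all_order all_algebra.
From Stdlib Require Import ClassicalEpsilon.
Set Implicit Arguments. Unset Strict Implicit. Unset Printing Implicit Defensive.
Import Order.TTheory GRing.Theory Num.Theory.

(* Along a wc-edge
   x -> y the candidate x dominates y (Margin x z >= Margin y z for all z), so
   a cycle of wc-edges would make x_1 dominate x_0, contradicting
   Margin x_0 x_1 > 0.  Otherwise let a -> b be a non-wc edge (hence an
   sc-edge) of least margin k among the non-wc edges.  Walking back from a
   around the cycle to b, every edge is wc or has margin >= k; by induction
   each visited vertex either dominates a or starts a majority path to a of
   strength >= k.  At b the first option contradicts Margin a b > 0 and the
   second contradicts (a, b) in sc.  Availability follows since an acyclic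
   relation on a nonempty finite set has a source. *)

Lemma ppath_cat (T : Type) (e : T -> T -> Prop) x p1 b p2 :
  ppath e x (p1 ++ b :: p2) <-> [/\ ppath e x p1, e (last x p1) b & ppath e b p2].
Proof.
elim: p1 x => [|y p1 IH] x /=; first by split=> [[]|[]].
by rewrite IH; split=> [[? []]|[[]]].
Qed.

Lemma ppath_sub (T : Type) (e1 e2 : T -> T -> Prop) x p :
  (forall u v, e1 u v -> e2 u v) -> ppath e1 x p -> ppath e2 x p.
Proof. by move=> e12; elim: p x => [|y p IH] x //= [/e12 ? /IH]. Qed.

Lemma ppath_argmin (T : Type) (A : T -> T -> Prop) d (R : orderType d)
    (w : T -> T -> R) x p :
  ppath A x p \/
  exists p1 b p2, [/\ p = p1 ++ b :: p2, ~ A (last x p1) b &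
    ppath (fun u v => A u v \/ (w (last x p1) b <= w u v)%O) x p].
Proof.
elim: p x => [|y p IH] x /=; first by left.
have [Axy|nAxy] := classic (A x y).
  case: (IH y) => [Ap | [p1 [b [p2 [-> nAb bound]]]]]; first by left.
  by right; exists (y :: p1), b, p2; split=> //=; split; first left.
right; case: (IH y) => [Ap | [p1 [b [p2 [-> nAb bound]]]]].
  exists [::], y, p; split=> //=; split; first by right.
  by apply: ppath_sub Ap => u v; left.
have [le_wxy|lt_wxy] := leP (w (last y p1) b) (w x y).
  by exists (y :: p1), b, p2; split=> //=; split; first right.
exists [::], y, (p1 ++ b :: p2); split=> //=; split; first by right.
by apply: ppath_sub bound => u v [|/(le_trans (ltW lt_wxy))]; [left|right].
Qed.

Lemma iter_periodic (T : finType) (f : T -> T) (x : T) :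
  exists y, exists2 m, 0 < m & iter m f y = y.
Proof.
have /trajectP[i lt_i_n loop_i] := looping_order f x.
exists (iter i f x), (order f x - i); first by rewrite subn_gt0.
by rewrite -iterD subnK ?(ltnW lt_i_n).
Qed.

Lemma ppath_rev_traject (T : Type) (e : T -> T -> Prop) (f : T -> T) x n :
  (forall y, e (f y) y) -> ppath e (iter n f x) (rev (traject f x n)).
Proof.
move=> ef; elim: n => [|n IH] //.
by rewrite trajectSr rev_rcons iterS /=.
Qed.

Lemma acyclic_source (T : finType) (e : T -> T -> Prop) :
  0 < #|T| -> acyclic e -> exists x, forall y, ~ e y x.
Proof.
move=> /card_gt0P[x0 _] acyc_e; apply: NNPP => no_source.
have [f ef] : exists f : T -> T, forall y, e (f y) y.
  apply: (ClassicalEpsilon.choice (fun y z => e z y)) => y; apply: NNPP => no_pred.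
  by apply: no_source; exists y => z ezy; apply: no_pred; exists z.
have [y [[|m] // _ fy]] := iter_periodic f x0.
apply: (acyc_e y (rev (traject f y m.+1))).
- by rewrite -size_eq0 size_rev size_traject.
- by rewrite trajectS rev_cons last_rcons.
- by rewrite -{1}fy; apply: ppath_rev_traject.
Qed.

Section Margins.
Local Open Scope ring_scope.

Variables (V X : finType) (P : V -> rel X).

Lemma Margin_skew x y : Margin P y x = - Margin P x y.
Proof. by rewrite /Margin opprB. Qed.

Lemma Marginxx x : Margin P x x = 0.
Proof. by rewrite /Margin subrr. Qed.

Definition dominates (x y : X) : Prop := forall z, Margin P y z <= Margin P x z.

Lemma dominates_refl x : dominates x x.
Proof. by []. Qed.

Lemma dominates_trans x y z : dominates x y -> dominates y z -> dominates x z.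
Proof. by move=> dxy dyz w; apply: le_trans (dyz w) (dxy w). Qed.

Lemma dominates_Margin x y w : dominates x y -> Margin P w x <= Margin P w y.
Proof. by move=> dxy; rewrite Margin_skew [Margin P w y]Margin_skew lerN2. Qed.

Lemma dominates_Margin_le0 x y : dominates y x -> Margin P x y <= 0.
Proof. by move=> /(dominates_Margin x); rewrite Marginxx. Qed.

Lemma wc_dominates x y : wc P x y -> dominates x y.
Proof. by case. Qed.

Lemma ppath_wc_dominates x p : ppath (wc P) x p -> dominates x (last x p).
Proof.
elim: p x => [|y p IH] x /=; first by move=> _; apply: dominates_refl.
by move=> [/wc_dominates dxy /IH]; apply: dominates_trans.
Qed.

Lemma wc_acyclic : acyclic (wc P).
Proof.
move=> x [|y p] // _ /= last_p [wc_xy /ppath_wc_dominates].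
rewrite last_p.
by move=> /dominates_Margin_le0; rewrite leNgt wc_xy.1.
Qed.

Definition reaches_at (k : int) (y a : X) : Prop :=
  dominates y a \/ exists r, [/\ r != [::], last y r = a &
                                 path (fun u v => k <= Margin P u v) y r].

Lemma reaches_at_dominates k u v a :
  dominates u v -> reaches_at k v a -> reaches_at k u a.
Proof.
move=> duv [dva | [r [r_nil last_r path_r]]].
  by left; apply: dominates_trans duv dva.
right; case: r r_nil last_r path_r => [|r1 r] // _ last_r /andP[k_vr1 path_r].
exists (r1 :: r); split=> //; apply/andP; split=> //.
exact: le_trans k_vr1 (duv r1).
Qed.

Lemma reaches_at_Margin k u v a :
  k <= Margin P u v -> reaches_at k v a -> reaches_at k u a.
Proof.
move=> k_uv [dva | [r [r_nil last_r path_r]]]; right.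
  by exists [:: a]; split=> //=; rewrite andbT (le_trans k_uv (dominates_Margin u dva)).
by exists (v :: r); split=> //=; rewrite k_uv.
Qed.

Lemma reaches_at_ppath k y q a :
  ppath (fun u v => wc P u v \/ k <= Margin P u v) y q ->
  reaches_at k (last y q) a -> reaches_at k y a.
Proof.
elim: q y => [|z q IH] y //= [[/wc_dominates|] step /IH reach /reach].
  exact: reaches_at_dominates.
exact: reaches_at_Margin.
Qed.

Lemma strength_path_ge k y r :
  r != [::] -> path (fun u v => k <= Margin P u v) y r -> k <= strength P y r.
Proof.
elim: r y => [|z [|w r] IH] y // _ /= /andP[k_yz path_r] //.
rewrite -/(strength P z (w :: r)) le_min k_yz.
exact: IH.
Qed.

Lemma reaches_at_not_sc a b : reaches_at (Margin P a b) b a -> ~ sc P a b.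
Proof.
move=> [dba | [r [r_nil last_r path_r]]] [pos_ab strongest].
  by move: pos_ab; rewrite ltNge dominates_Margin_le0.
have maj_r : majority_path P b r.
  by apply: sub_path path_r => u v; apply: lt_le_trans.
by move: (strongest r r_nil last_r maj_r); rewrite ltNge strength_path_ge.
Qed.

Lemma scwc_acyclic : acyclic (scwc P).
Proof.
move=> x p p_nil last_p cycle_p.
case: (ppath_argmin (wc P) (Margin P) x p) => [| [p1 [b [p2 [def_p not_wc bound]]]]].
  exact: wc_acyclic p_nil last_p.
set a := last x p1 in not_wc bound.
move: cycle_p bound; rewrite def_p last_cat /= in last_p *.
move=> /ppath_cat[_ scwc_ab _] /ppath_cat[bound1 _ bound2].
have sc_ab : sc P a b by case: scwc_ab.
have reach_x : reaches_at (Margin P a b) x a.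
  exact: reaches_at_ppath bound1 (or_introl (dominates_refl a)).
have reach_b : reaches_at (Margin P a b) b a.
  by apply: reaches_at_ppath bound2 _; rewrite last_p.
exact: reaches_at_not_sc reach_b sc_ab.
Qed.

End Margins.

Theorem proposition8p2 (V X : finType) (P : V -> rel X) :
  0 < #|V| -> 0 < #|X| -> linear_profile P ->
  available P /\ acyclic (scwc P).
Proof.
move=> _ X_gt0 _; have acyc : acyclic (scwc P) by exact: scwc_acyclic.
by split=> //; apply: acyclic_source X_gt0 acyc.
Qed.
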